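(* Let $q\ge2$ be a prime power and $d\ge6$. If either $1\le i\le d-5$ and $2\le j\le d$, or $i=d-4$ and $2\le j\le 4$, then $|Q_j(i)|>|Q_j(i+1)|$.
   Context: Let $b=-q$. For integers $m\ge0$ and $l$, ${m\brack l}_b=\prod_{t=1}^{l}\frac{b^{m-t+1}-1}{b^t-1}$ for $l\ge0$ and $0$ for $l<0$. For $0\le i,j\le d$, $$Q_j(i)=\sum_{h=0}^{\min\{j,d-i\}}(-1)^j(-q)^{\binom{j-h}{2}+hd}{d-h\brack d-j}_b{d-i\brack h}_b,$$ the eigenvalues of the Hermitian forms graph $Q_q(d,j)$ (vertices: $d\times d$ Hermitian matrices over $\mathbb F_{q^2}$, adjacent iff their difference has rank $j$). *)

From HB Require Import structures.
From mathcomp Require Import all_boot all_order all_algebra.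
Set Implicit Arguments. Unset Strict Implicit. Unset Printing Implicit Defensive.
Import Order.TTheory GRing.Theory Num.Theory.
Local Open Scope ring_scope.

Definition prime_power (q : nat) : Prop :=
  exists p k : nat, prime p /\ (0 < k)%N /\ q = (p ^ k)%N.

Definition bq (q : nat) : rat := - (q%:R).

(* For t <= m+1 the exponent m-t+1 = (m.+1 - t) is exact; if l > m the
   factor t = m+1 vanishes, so truncation for t > m+1 is irrelevant. *)
Definition gbin (b : rat) (m l : nat) : rat :=
  \prod_(1 <= t < l.+1) ((b ^+ (m.+1 - t)%N - 1) / (b ^+ t - 1)).

Definition Qeig (q d j i : nat) : rat :=
  \sum_(0 <= h < (minn j (d - i)).+1)
    ((-1) ^+ j * (bq q) ^+ ('C(j - h, 2) + h * d)%N
       * gbin (bq q) (d - h) (d - j) * gbin (bq q) (d - i) h).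

From HB Require Import structures.
From mathcomp Require Import all_boot all_order all_algebra.
From mathcomp Require Import ring lra zify.
Set Implicit Arguments. Unset Strict Implicit. Unset Printing Implicit Defensive.
Import Order.TTheory GRing.Theory Num.Theory.
Local Open Scope ring_scope.

(* Put x = 1/q, so 0 < x <= 1/2, and nfac x n = 1 - (-x)^n, so that
   |(-q)^n - 1| = q^n nfac x n with nfac x n close to 1 for n >= 1.  With
   m = d - i, Q_j(i) is the sum over h <= H = min(j, m) of summands term m h;
   write a_h = |term m h|.  Two recurrences of Gaussian binomials in base -q
   give the exact ratios
     |term (m-1) h| = w_h a_h,  w_h = x^h nfac(m-h) / nfac(m) <= 1   (weight),
     a_h = rho_h a_(h+1),  rho_h = x^(m-h) nfac(d-h) nfac(h+1)
                                    / (nfac(j-h) nfac(m-h))          (rho).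
   By the triangle inequality the theorem follows once the top summand
   dominates: sum_(h<H) a_h (1 + w_h) + a_H w_H < a_H.  As rho_h <= 1/4 away
   from the top, this reduces to explicit bounds on rho_(H-1),
   rho_(H-2) rho_(H-1), rho_(H-3) and on w_(H-2), w_(H-1), w_H, which are
   polynomial inequalities in x, checked separately for H = m <= j and H = j < m. *)

(* nfac x n = 1 - (-x)^n: for x = 1/q this is |(-q)^n - 1| / q^n, the
   normalized size of a factor of a Gaussian binomial in base -q. *)
Definition nfac (R : pzRingType) (x : R) (n : nat) : R := 1 - (- x) ^+ n.

Lemma nfac_odd (R : pzRingType) (x : R) n : odd n -> nfac x n = 1 + x ^+ n.
Proof. by move=> on; rewrite /nfac exprNn -signr_odd on expr1 mulN1r opprK. Qed.

Lemma nfac_even (R : pzRingType) (x : R) n : ~~ odd n -> nfac x n = 1 - x ^+ n.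
Proof. by move=> /negbTE on; rewrite /nfac exprNn -signr_odd on expr0 mul1r. Qed.

Lemma nfac1 (R : pzRingType) (x : R) : nfac x 1 = 1 + x.
Proof. by rewrite nfac_odd // expr1. Qed.

Lemma nfac2 (R : pzRingType) (x : R) : nfac x 2 = 1 - x ^+ 2.
Proof. by rewrite nfac_even. Qed.

Lemma nfac3 (R : pzRingType) (x : R) : nfac x 3 = 1 + x ^+ 3.
Proof. by rewrite nfac_odd. Qed.

Lemma ratio_le (R : realFieldType) (N D U L K : R) :
  0 <= N -> N <= U -> 0 < L -> L <= D -> U <= K * L -> N / D <= K.
Proof.
move=> N0 NU L0 LD UK; have D0 : 0 < D by exact: lt_le_trans L0 LD.
have K0 : 0 <= K by rewrite -(pmulr_lge0 _ L0); lra.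
rewrite ler_pdivrMr //; apply: le_trans NU (le_trans UK _); exact: ler_wpM2l.
Qed.

Lemma ler_pM3 (R : realDomainType) (a b c A B C : R) :
  0 <= a -> 0 <= b -> 0 <= c -> a <= A -> b <= B -> c <= C -> a * b * c <= A * B * C.
Proof.
move=> a0 b0 c0 aA bB cC; apply: ler_pM => //; first exact: mulr_ge0.
exact: ler_pM.
Qed.

(* The shapes of the quantities attached to the summands of Q_j(i): the
   weight relating a summand for i + 1 to the one for i (see weight), the
   ratio of consecutive summands (see rho), and the ratio of summands two
   steps apart, expressed through products of consecutive factors (npair). *)
Definition wratio (R : fieldType) (x : R) (h n m : nat) : R :=
  x ^+ h * nfac x n / nfac x m.

Definition qratio (R : fieldType) (x : R) (e n1 n2 n3 n4 : nat) : R :=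
  x ^+ e * nfac x n1 * nfac x n2 / (nfac x n3 * nfac x n4).

Definition npair (R : pzRingType) (x : R) (n : nat) : R := nfac x n * nfac x n.+1.

Definition pratio (R : fieldType) (x : R) (e s t u : nat) : R :=
  x ^+ e * npair x s * npair x t / (npair x u * npair x 1).

Section SmallX.
Variables (R : realFieldType) (x : R).
Hypotheses (x_gt0 : 0 < x) (x_le_half : x <= 1/2).

(* lra and nra only inspect the local context, so the range of x is copied there. *)
Local Ltac x_range := have ? := x_gt0; have ? := x_le_half.

Lemma expx_ge0 n : 0 <= x ^+ n.
Proof. exact/exprn_ge0/ltW. Qed.

Lemma expx_le1 n : x ^+ n <= 1.
Proof. by apply: exprn_ile1; [exact: ltW | x_range; lra]. Qed.

Lemma expx_anti k n : (k <= n)%N -> x ^+ n <= x ^+ k.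
Proof. by move=> kn; apply: ler_wiXn2l => //; [exact: ltW | x_range; lra]. Qed.

Lemma expx_small :
  [/\ x ^+ 2 <= 1/4, x ^+ 3 <= 1/8, x ^+ 4 <= 1/16 & x ^+ 5 <= 1/32].
Proof.
have step n c : x ^+ n <= c -> x ^+ n.+1 <= c / 2.
  move=> xn; rewrite exprS; have := expx_ge0 n.
  have : x * x ^+ n <= 1/2 * x ^+ n by apply: ler_wpM2r => //; exact: expx_ge0.
  have : 1/2 * x ^+ n <= 1/2 * c by apply: ler_wpM2l => //; x_range; lra.
  x_range; lra.
have x1 : x ^+ 1 <= 1/2 by rewrite expr1.
have x2 := step _ _ x1; have x3 := step _ _ x2; have x4 := step _ _ x3.
have x5 := step _ _ x4; split; x_range; lra.
Qed.

Local Ltac x_facts := x_range; have [? ? ? ?] := expx_small.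

Lemma nfac_near1 k n : (k <= n)%N -> 1 - x ^+ k <= nfac x n <= 1 + x ^+ k.
Proof.
move=> kn; have := expx_anti kn; have := expx_ge0 n.
by case: (boolP (odd n)) => on; [rewrite nfac_odd | rewrite nfac_even] => //; x_range; lra.
Qed.

Lemma nfac_ge_odd k n : odd k -> (k <= n)%N -> 1 - x ^+ k.+1 <= nfac x n.
Proof.
move=> ok; rewrite leq_eqVlt => /predU1P[<-|kn]; last by case/andP: (nfac_near1 kn).
by rewrite nfac_odd //; have := expx_ge0 k; have := expx_ge0 k.+1; x_range; lra.
Qed.

Lemma nfac_le_even k n : ~~ odd k -> (k <= n)%N -> nfac x n <= 1 + x ^+ k.+1.
Proof.
move=> ek; rewrite leq_eqVlt => /predU1P[<-|kn]; last by case/andP: (nfac_near1 kn).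
by rewrite nfac_even //; have := expx_ge0 k; have := expx_ge0 k.+1; x_range; lra.
Qed.

Lemma nfac_le n : nfac x n <= 1 + x.
Proof.
case: n => [|n]; first by rewrite /nfac expr0 subrr; x_range; lra.
by case/andP: (nfac_near1 (isT : (1 <= n.+1)%N)); rewrite expr1.
Qed.

Lemma nfac_ge0 n : 0 <= nfac x n.
Proof.
case: n => [|n]; first by rewrite /nfac expr0 subrr.
by case/andP: (nfac_near1 (isT : (1 <= n.+1)%N)); rewrite expr1; x_range; lra.
Qed.

Lemma npair_ge0 n : 0 <= npair x n.
Proof. exact: mulr_ge0 (nfac_ge0 n) (nfac_ge0 n.+1). Qed.

Local Hint Resolve expx_ge0 nfac_ge0 npair_ge0 : core.

Lemma nfac_gt0 n : (1 <= n)%N -> 0 < nfac x n.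
Proof. by move=> n1; have := @nfac_ge_odd 1 _ isT n1; have [x2 _ _ _] := expx_small; x_range; lra. Qed.

(* Two consecutive factors nearly compensate each other. *)
Lemma nfac_pair_near1 k n : (k <= n)%N ->
  1 - x ^+ k <= nfac x n * nfac x n.+1 <= 1 + x ^+ k.
Proof.
move=> kn; have := expx_anti kn; have u0 := expx_ge0 n; have u1 := expx_le1 n.
have xu0 : 0 <= x * x ^+ n by apply: mulr_ge0 => //; exact: ltW.
case: (boolP (odd n)) => on.
  rewrite nfac_odd // nfac_even /= ?on // exprS.
  have : x ^+ n <= 1/2.
    by have := @expx_anti 1 n (odd_gt0 on); rewrite expr1; x_range; lra.
  x_range; nra.
rewrite nfac_even // nfac_odd /= ?(negbTE on) // exprS; x_range; nra.
Qed.

Lemma nfac_pair_ge_odd k n : odd k -> (k <= n)%N ->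
  1 - x ^+ k.+1 <= nfac x n * nfac x n.+1.
Proof.
move=> ok; rewrite leq_eqVlt => /predU1P[<-|kn].
  rewrite nfac_odd // nfac_even /= ?ok // exprS.
  have := expx_ge0 k; have := expx_ge0 k.+1; rewrite exprS => k0 k1.
  have : x ^+ k <= 1/2.
    by have := @expx_anti 1 k (odd_gt0 ok); rewrite expr1; x_range; lra.
  x_range; nra.
by case/andP: (nfac_pair_near1 kn).
Qed.

Lemma nfac_pair_le_even k n : ~~ odd k -> (k <= n)%N ->
  nfac x n * nfac x n.+1 <= 1 + x ^+ k.+1.
Proof.
move=> ek; rewrite leq_eqVlt => /predU1P[<-|kn]; last by case/andP: (nfac_pair_near1 kn).
rewrite nfac_even // nfac_odd /= ?(negbTE ek) // exprS.
have := expx_ge0 k; have := expx_le1 k; have := expx_ge0 k.+1; rewrite exprS.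
have : 0 <= x * x ^+ k by apply: mulr_ge0 => //; exact: ltW.
x_range; nra.
Qed.

(* x <= 4/9 (1 - x^2)(1 + x), with equality at x = 1/2; behind several ratio bounds. *)
Lemma x_le_nfac12 : x <= 4/9 * (nfac x 2 * nfac x 1).
Proof.
rewrite nfac2 nfac1.
have : 0 <= (1 - 2 * x) * (4 + 3 * x + 2 * x ^+ 2).
  by apply: mulr_ge0; have := expx_ge0 2; x_facts; lra.
by x_facts; lra.
Qed.

(* Bounds on the weights: nfac x m >= 15/16 for m >= 3. *)
Lemma wratio_le h n m (A B K : R) : (3 <= m)%N ->
  x ^+ h <= A -> nfac x n <= B -> A * B <= K * (15/16) -> wratio x h n m <= K.
Proof.
move=> m3 hA nB ABK; rewrite /wratio.
apply: (ratio_le (U := A * B) (L := 15/16)) => //.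
- exact: mulr_ge0.
- exact: ler_pM.
- by x_facts; lra.
- by have := nfac_ge_odd (isT : odd 3) m3; x_facts; lra.
Qed.

Lemma wratio_le1 h m : (3 <= m)%N -> wratio x h (m - h) m <= 1.
Proof.
move=> m3; case: h => [|h].
  by rewrite /wratio expr0 mul1r subn0 divff // gt_eqF // nfac_gt0 //; lia.
apply: (wratio_le (A := 1/2) (B := 3/2)) => //.
- by have := expx_anti (isT : (1 <= h.+1)%N); rewrite expr1; x_facts; lra.
- by have := nfac_le (m - h.+1); x_facts; lra.
- by lra.
Qed.

Lemma qratio_le_quarter e n1 n2 n3 n4 : (4 <= e)%N -> (1 <= n3)%N -> (1 <= n4)%N ->
  qratio x e n1 n2 n3 n4 <= 1/4.
Proof.
move=> e4 n3_1 n4_1.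
apply: (ratio_le (U := x ^+ 4 * (1 + x) * (1 + x)) (L := (1 - x ^+ 2) * (1 - x ^+ 2))).
- by apply: mulr_ge0; first exact: mulr_ge0.
- by apply: ler_pM3; rewrite ?expx_anti ?nfac_le.
- by x_facts; apply: mulr_gt0; lra.
- by apply: ler_pM; rewrite ?nfac_ge_odd //; x_facts; lra.
- have : x ^+ 4 * (1 + x) * (1 + x) <= 1/16 * (3/2) * (3/2).
    by apply: ler_pM3; rewrite ?expx_ge0; x_facts; lra.
  have : 3/4 * (3/4) <= (1 - x ^+ 2) * (1 - x ^+ 2) by apply: ler_pM; x_facts; lra.
  lra.
Qed.

(* The ratio of the two top summands when the sum is cut off by m <= j. *)
Lemma qratio_top_cut e n1 n2 n3 : (1 <= e)%N -> (2 <= n1)%N -> (4 <= n2)%N -> (1 <= n3)%N ->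
  qratio x e n1 n2 n3 1 <= 33/64.
Proof.
move=> e1 n1_2 n2_4 n3_1.
apply: (ratio_le (U := x * (1 + x ^+ 3) * (1 + x ^+ 5)) (L := nfac x 2 * nfac x 1)).
- by apply: mulr_ge0; first exact: mulr_ge0.
- apply: ler_pM3; rewrite ?nfac_le_even //.
  by have := expx_anti e1; rewrite expr1.
- by rewrite nfac2 nfac1; apply: mulr_gt0; x_facts; lra.
- apply: ler_pM; rewrite ?nfac_ge0 ?lexx // nfac2; exact: (nfac_ge_odd (isT : odd 1)).
- have : (1 + x ^+ 3) * (1 + x ^+ 5) <= 9/8 * (33/32).
    by apply: ler_pM; have := expx_ge0 3; have := expx_ge0 5; x_facts; lra.
  have : 0 <= (1 + x ^+ 3) * (1 + x ^+ 5).
    by apply: mulr_ge0; have := expx_ge0 3; have := expx_ge0 5; lra.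
  have := x_le_nfac12; have := nfac_ge0 1; have := nfac_ge0 2; x_facts; nra.
Qed.

(* The ratio of the two top summands when the sum is cut off by j < m. *)
Lemma qratio_top_full e n1 n2 n4 : (2 <= e)%N -> (3 <= n1)%N -> (2 <= n2)%N -> (2 <= n4)%N ->
  qratio x e n1 n2 1 n4 <= 9/32.
Proof.
move=> e2 n1_3 n2_2 n4_2.
apply: (ratio_le (U := x ^+ 2 * (1 + x ^+ 3) * (1 + x ^+ 3)) (L := nfac x 1 * nfac x 2)).
- by apply: mulr_ge0; first exact: mulr_ge0.
- by apply: ler_pM3; rewrite ?nfac_le_even ?expx_anti //; lia.
- by rewrite nfac2 nfac1; apply: mulr_gt0; x_facts; lra.
- apply: ler_pM; rewrite ?nfac_ge0 ?lexx // nfac2.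
  exact: (nfac_ge_odd (isT : odd 1) (ltnW n4_2)).
- have : (1 + x ^+ 3) * (1 + x ^+ 3) <= 9/8 * (9/8).
    by apply: ler_pM; have := expx_ge0 3; x_facts; lra.
  have : 0 <= (1 + x ^+ 3) * (1 + x ^+ 3).
    by apply: mulr_ge0; have := expx_ge0 3; lra.
  have : x ^+ 2 <= x / 2 by rewrite expr2; x_facts; nra.
  have := x_le_nfac12; have := nfac_ge0 1; have := nfac_ge0 2; have := expx_ge0 2; x_facts; nra.
Qed.

(* The ratio of the summands m - 3 and m - 2 when the sum is cut off by m <= j. *)
Lemma qratio_third_cut e n1 n2 n3 : (3 <= e)%N -> (2 <= n1)%N -> (2 <= n2)%N -> (3 <= n3)%N ->
  qratio x e n1 n2 n3 3 <= 27/160.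
Proof.
move=> e3 n1_2 n2_2 n3_3.
apply: (ratio_le (U := x ^+ 3 * (1 + x ^+ 3) * (1 + x ^+ 3)) (L := (1 - x ^+ 4) * 1)).
- by apply: mulr_ge0; first exact: mulr_ge0.
- by apply: ler_pM3; rewrite ?nfac_le_even ?expx_anti.
- by rewrite mulr1; x_facts; lra.
- apply: ler_pM; [by x_facts; lra | by [] | exact: (nfac_ge_odd (isT : odd 3)) |].
  by rewrite nfac3; have := expx_ge0 3; lra.
- have : x ^+ 3 * (1 + x ^+ 3) * (1 + x ^+ 3) <= 1/8 * (9/8) * (9/8).
    by apply: ler_pM3; have := expx_ge0 3; x_facts; lra.
  by x_facts; lra.
Qed.

(* Ratio of the summands two steps below the top, for m <= j ... *)
Lemma pratio_cut e s t u : (3 <= e)%N -> (2 <= s)%N -> (2 <= t)%N -> (1 <= u)%N ->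
  pratio x e s t u <= 3/16.
Proof.
move=> e3 s2 t2 u1.
have n12 : npair x 1 = (1 + x) * (1 - x ^+ 2) by rewrite /npair nfac1 nfac2.
apply: (ratio_le (U := x ^+ 3 * (1 + x ^+ 3) * (1 + x ^+ 3))
                 (L := (1 - x ^+ 2) * ((1 + x) * (1 - x ^+ 2)))).
- by apply: mulr_ge0; first exact: mulr_ge0.
- by apply: ler_pM3; rewrite ?nfac_pair_le_even ?expx_anti.
- by apply: mulr_gt0; [|apply: mulr_gt0]; x_facts; lra.
- rewrite n12; apply: ler_pM; [by x_facts; lra | by apply: mulr_ge0; x_facts; lra | | by []].
  exact: (nfac_pair_ge_odd (isT : odd 1) u1).
- have : x ^+ 3 <= 1/2 * x ^+ 2 by rewrite exprS; apply: ler_wpM2r => //.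
  have : (1 + x ^+ 3) * (1 + x ^+ 3) <= 9/8 * (9/8).
    by apply: ler_pM; have := expx_ge0 3; x_facts; lra.
  have : 0 <= (1 + x ^+ 3) * (1 + x ^+ 3).
    by apply: mulr_ge0; have := expx_ge0 3; lra.
  have := x_le_nfac12; rewrite nfac2 nfac1.
  have := expx_ge0 2; have := expx_ge0 3; x_facts; nra.
Qed.

(* ... and for j < m. *)
Lemma pratio_full e s t u : (5 <= e)%N -> (2 <= s)%N -> (1 <= t)%N -> (1 <= u)%N ->
  pratio x e s t u <= 1/16.
Proof.
move=> e5 s2 t1 u1.
have n12 : npair x 1 = (1 + x) * (1 - x ^+ 2) by rewrite /npair nfac1 nfac2.
apply: (ratio_le (U := x ^+ 5 * (1 + x ^+ 3) * (1 + x))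
                 (L := (1 - x ^+ 2) * ((1 + x) * (1 - x ^+ 2)))).
- by apply: mulr_ge0; first exact: mulr_ge0.
- apply: ler_pM3; rewrite ?nfac_pair_le_even ?expx_anti //.
  by have /andP[_] := nfac_pair_near1 t1; rewrite expr1.
- by apply: mulr_gt0; [|apply: mulr_gt0]; x_facts; lra.
- rewrite n12; apply: ler_pM; [by x_facts; lra | by apply: mulr_ge0; x_facts; lra | | by []].
  exact: (nfac_pair_ge_odd (isT : odd 1) u1).
- have small : x ^+ 5 * (1 + x ^+ 3) <= 1/32 * (9/8).
    by apply: ler_pM; have := expx_ge0 3; have := expx_ge0 5; x_facts; lra.
  have big : 3/4 * (3/4) <= (1 - x ^+ 2) * (1 - x ^+ 2) by apply: ler_pM; x_facts; lra.
  have : 0 <= (1 + x) * ((1 - x ^+ 2) * (1 - x ^+ 2) / 16 - x ^+ 5 * (1 + x ^+ 3)).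
    by apply: mulr_ge0; x_facts; lra.
  lra.
Qed.

End SmallX.

Lemma norm_sum_lt_of_dominant_top (R : realDomainType) (t0 t1 w : nat -> R) (H0 H : nat) :
  (H0 <= H)%N ->
  (forall h, (h <= H0)%N -> `|t0 h| = `|t1 h| * w h) ->
  (forall h, 0 <= w h) ->
  \sum_(0 <= h < H) `|t1 h| * (1 + w h) + `|t1 H| * w H < `|t1 H| ->
  `|\sum_(0 <= h < H0.+1) t0 h| < `|\sum_(0 <= h < H.+1) t1 h|.
Proof.
move=> H0H t01 w0 dom.
have upper : `|\sum_(0 <= h < H0.+1) t0 h| <= \sum_(0 <= h < H.+1) `|t1 h| * w h.
  apply: (le_trans (ler_norm_sum _ _ _)).
  rewrite [X in _ <= X](@big_cat_nat _ _ _ H0.+1 0 H.+1) //=.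
  rewrite -[X in X <= _]addr0; apply: lerD.
    by apply: ler_sum_nat => h /andP[_ hH0]; rewrite t01.
  by apply: sumr_ge0 => h _; apply: mulr_ge0.
have lower : `|t1 H| - \sum_(0 <= h < H) `|t1 h| <= `|\sum_(0 <= h < H.+1) t1 h|.
  rewrite big_nat_recr //= addrC; apply: le_trans (lerB_normD _ _).
  by rewrite lerB // ler_norm_sum.
have split_sum : \sum_(0 <= h < H) `|t1 h| * (1 + w h) =
                 \sum_(0 <= h < H) `|t1 h| + \sum_(0 <= h < H) `|t1 h| * w h.
  by rewrite -big_split /=; apply: eq_bigr => h _; ring.
rewrite [X in _ <= X]big_nat_recr //= in upper; lra.
Qed.

Lemma geometric_tail (R : realFieldType) (a : nat -> R) k :
  (forall h, 0 <= a h) -> (forall h, (h.+2 <= k.+1)%N -> a h <= a h.+1 / 4) ->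
  \sum_(0 <= h < k.+1) a h <= 4/3 * a k.
Proof.
move=> a0 decay.
suff partial n : (n <= k)%N -> \sum_(0 <= h < n.+1) a h <= 4/3 * a n by exact: partial.
elim: n => [|n IH] nk; first by rewrite big_nat1; have := a0 0%N; lra.
rewrite big_nat_recr //=.
by have := IH (ltnW nk); have := decay n nk; have := a0 n.+1; lra.
Qed.

Lemma dominant_top_of_ratios (R : realFieldType) (a w : nat -> R) (k : nat)
    (r1 r2 c W0 W1 W2 : R) :
  (forall h, 0 <= a h) -> 0 < a k.+2 ->
  (forall h, (h < k)%N -> 0 <= w h <= 1) ->
  0 <= w k.+1 <= W1 -> 0 <= w k <= W2 -> w k.+2 <= W0 ->
  a k.+1 <= r1 * a k.+2 -> a k <= r2 * a k.+2 ->
  ((0 < k)%N -> a k.-1 <= c * a k) -> 0 <= c ->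
  (forall h, (h.+2 <= k)%N -> a h <= a h.+1 / 4) ->
  r1 * (1 + W1) + r2 * (1 + W2 + 8/3 * c) + W0 < 1 ->
  \sum_(0 <= h < k.+2) a h * (1 + w h) + a k.+2 * w k.+2 < a k.+2.
Proof.
move=> a0 top_pos w01 /andP[w1a w1b] /andP[w2a w2b] w0b r1b r2b cb c0 decay K1.
have tail : \sum_(0 <= h < k) a h * (1 + w h) <= 8/3 * c * a k.
  apply: (@le_trans _ _ (\sum_(0 <= h < k) 2 * a h)).
    apply: ler_sum_nat => h /andP[_ hk].
    by have /andP[] := w01 h hk; have := a0 h; nra.
  rewrite -mulr_sumr (_ : 8/3 * c * a k = 2 * (4/3 * c * a k)); last by ring.
  rewrite ler_pM2l //; have [->|k_pos] := posnP k.
    by rewrite big_geq //; have := a0 0%N; nra.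
  have kE : k = k.-1.+1 by rewrite prednK.
  have decay' h : (h.+2 <= k.-1.+1)%N -> a h <= a h.+1 / 4 by rewrite -kE; exact: decay.
  rewrite [X in \sum_(_ <= _ < X) _]kE; apply: le_trans (geometric_tail a0 decay') _.
  by have := cb k_pos; lra.
rewrite big_nat_recr //= big_nat_recr //=.
have below1 : a k.+1 * (1 + w k.+1) <= r1 * a k.+2 * (1 + W1).
  by have := a0 k.+1; have := a0 k.+2; nra.
have below2 : a k * (1 + w k) <= r2 * a k.+2 * (1 + W2).
  by have := a0 k; have := a0 k.+2; nra.
have top : a k.+2 * w k.+2 <= W0 * a k.+2 by have := a0 k.+2; nra.
have tail_top : c * a k <= c * (r2 * a k.+2) by apply: ler_wpM2l.
nra.
Qed.

Lemma gbin0 (b : rat) n : gbin b n 0 = 1.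
Proof. by rewrite /gbin big_geq. Qed.

Lemma gbinS (b : rat) n l :
  gbin b n l.+1 = gbin b n l * ((b ^+ (n - l) - 1) / (b ^+ l.+1 - 1)).
Proof. by rewrite /gbin big_nat_recr //= subSS. Qed.

Lemma gbin_shift (b : rat) n l :
  gbin b n l * (b ^+ n.+1 - 1) = gbin b n.+1 l * (b ^+ (n.+1 - l) - 1).
Proof.
elim: l => [|l IH]; first by rewrite !gbin0 subn0.
rewrite !gbinS mulrAC IH subSS; ring.
Qed.

Definition xq (q : nat) : rat := (q%:R)^-1.

Section BaseMinusQ.
Variable q : nat.
Hypothesis q_ge2 : (2 <= q)%N.

Lemma xq_gt0 : 0 < xq q.
Proof. by rewrite /xq invr_gt0 ltr0n; lia. Qed.

Lemma xq_le_half : xq q <= 1/2.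
Proof. by rewrite /xq mul1r lef_pV2 ?ler_nat ?posrE ?ltr0n //; lia. Qed.

Lemma norm_bq_exp n : `|bq q ^+ n| = (xq q ^+ n)^-1.
Proof. by rewrite normrX /bq normrN ger0_norm ?ler0n // /xq exprVn invrK. Qed.

Lemma norm_bq_expB1 n : `|bq q ^+ n - 1| = nfac (xq q) n / xq q ^+ n.
Proof.
have qn0 : (q%:R : rat) ^+ n != 0 by rewrite expf_neq0 // pnatr_eq0; lia.
have qn1 : 1 <= (q%:R : rat) ^+ n by rewrite -natrX ler1n expn_gt0; lia.
rewrite /bq /xq exprNn exprVn invrK -signr_odd.
case: (boolP (odd n)) => on.
  rewrite nfac_odd // expr1 mulN1r -opprD normrN ger0_norm; last lra.
  by rewrite exprVn; field.
rewrite nfac_even // expr0 mul1r ger0_norm; last lra.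
by rewrite exprVn; field.
Qed.

Lemma bq_expB1_neq0 n : (1 <= n)%N -> bq q ^+ n - 1 != 0.
Proof.
move=> n1; rewrite -normr_gt0 norm_bq_expB1 divr_gt0 //.
  exact: nfac_gt0 xq_gt0 xq_le_half _ n1.
by rewrite exprn_gt0 // xq_gt0.
Qed.

Lemma gbin_neq0 n l : (l <= n)%N -> gbin (bq q) n l != 0.
Proof.
move=> ln; rewrite /gbin prodf_seq_neq0; apply/allP => t.
rewrite mem_index_iota => /andP[t1 t2] /=.
by rewrite mulf_neq0 // ?invr_eq0; apply: bq_expB1_neq0; lia.
Qed.

End BaseMinusQ.

Definition term (q d j m h : nat) : rat :=
  (-1) ^+ j * bq q ^+ ('C(j - h, 2) + h * d)
    * gbin (bq q) (d - h) (d - j) * gbin (bq q) m h.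

Lemma QeigE q d j i :
  Qeig q d j i = \sum_(0 <= h < (minn j (d - i)).+1) term q d j (d - i) h.
Proof. by []. Qed.

(* Passing from m = n to m = n + 1 (i.e. from i + 1 to i). *)
Lemma term_shift q d j n h :
  term q d j n h * (bq q ^+ n.+1 - 1) = term q d j n.+1 h * (bq q ^+ (n.+1 - h) - 1).
Proof. by rewrite /term -!mulrA gbin_shift. Qed.

Lemma term_succ q d j m h : (2 <= q)%N -> (h < j)%N -> (j <= d)%N ->
  term q d j m h.+1 * ((bq q ^+ (d - h) - 1) * (bq q ^+ h.+1 - 1)) =
  term q d j m h * (bq q ^+ (d + h.+1 - j)
                    * ((bq q ^+ (j - h) - 1) * (bq q ^+ (m - h) - 1))).
Proof.
move=> q2 hj jd.
have e_exp : ('C(j - h.+1, 2) + h.+1 * d = 'C(j - h, 2) + h * d + (d + h.+1 - j))%N.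
  by rewrite (_ : j - h = (j - h.+1).+1)%N ?binS ?bin1 ?mulSn; lia.
have e_top := gbin_shift (bq q) (d - h.+1) (d - j).
rewrite (_ : (d - h.+1).+1 = d - h)%N in e_top; last by lia.
rewrite (_ : d - h - (d - j) = j - h)%N in e_top; last by lia.
have e_bot : gbin (bq q) m h.+1 * (bq q ^+ h.+1 - 1) =
             gbin (bq q) m h * (bq q ^+ (m - h) - 1).
  by rewrite gbinS -mulrA divfK // bq_expB1_neq0.
rewrite /term e_exp exprD.
move: e_top e_bot; move: (gbin _ (d - h.+1) _) (gbin _ (d - h) _) (gbin _ m h.+1) (gbin _ m h).
move=> g1 g0 k1 k0 e_top e_bot.
transitivity ((-1) ^+ j * bq q ^+ ('C(j - h, 2) + h * d) * bq q ^+ (d + h.+1 - j)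
               * (g1 * (bq q ^+ (d - h) - 1)) * (k1 * (bq q ^+ h.+1 - 1))); first by ring.
by rewrite e_top e_bot; ring.
Qed.

Lemma term_neq0 q d j m h : (2 <= q)%N -> (h <= j)%N -> (h <= m)%N -> (j <= d)%N ->
  term q d j m h != 0.
Proof.
move=> q2 hj hm jd; rewrite /term !mulf_neq0 ?signr_eq0 ?gbin_neq0 //; try lia.
by rewrite expf_neq0 // /bq oppr_eq0 pnatr_eq0; lia.
Qed.

(* |term n h| = |term (n+1) h| * weight (n+1) h  (from term_shift). *)
Definition weight (q m h : nat) : rat := wratio (xq q) h (m - h) m.

(* |term m h| = |term m (h+1)| * rho h  (from term_succ). *)
Definition rho (q d j m h : nat) : rat :=
  qratio (xq q) (m - h) (d - h) h.+1 (j - h) (m - h).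

Section TermNorms.
Variables (q d j : nat).
Hypothesis q_ge2 : (2 <= q)%N.

Lemma xq_exp_neq0 n : xq q ^+ n != 0.
Proof. by rewrite expf_neq0 // gt_eqF // xq_gt0. Qed.

Lemma nfac_xq_neq0 n : (1 <= n)%N -> nfac (xq q) n != 0.
Proof. by move=> n1; rewrite gt_eqF // nfac_gt0 // ?xq_gt0 ?xq_le_half. Qed.

Lemma norm_term_shift n h : (h <= n.+1)%N ->
  `|term q d j n h| = `|term q d j n.+1 h| * weight q n.+1 h.
Proof.
move=> hn; have E := congr1 Num.norm (term_shift q d j n h).
have xE : xq q ^+ n.+1 = xq q ^+ h * xq q ^+ (n.+1 - h) by rewrite -exprD subnKC.
rewrite /= normrM [RHS]normrM !norm_bq_expB1 // xE in E.
have n0 := nfac_xq_neq0 (isT : (1 <= n.+1)%N).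
transitivity (`|term q d j n h| * (nfac (xq q) n.+1 / (xq q ^+ h * xq q ^+ (n.+1 - h)))
              * (xq q ^+ h * xq q ^+ (n.+1 - h) / nfac (xq q) n.+1)).
  by field; rewrite n0 !xq_exp_neq0.
by rewrite E /weight /wratio; field; rewrite n0 !xq_exp_neq0.
Qed.

Lemma norm_term_succ m h : (h < j)%N -> (j <= d)%N -> (h < m)%N ->
  `|term q d j m h| = `|term q d j m h.+1| * rho q d j m h.
Proof.
move=> hj jd hm; move: (term_succ m q_ge2 hj jd).
move: (term q d j m h.+1) (term q d j m h) => t1 t0 /(congr1 Num.norm) /=.
rewrite !normrM norm_bq_exp !norm_bq_expB1 // => E.
have e_lhs : xq q ^+ (d - h) * xq q ^+ h.+1 = xq q ^+ d.+1 by rewrite -exprD; congr (_ ^+ _); lia.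
have e_rhs : xq q ^+ (d + h.+1 - j) * xq q ^+ (j - h) = xq q ^+ d.+1.
  by rewrite -exprD; congr (_ ^+ _); lia.
have [n1 n2] : nfac (xq q) (j - h) != 0 /\ nfac (xq q) (m - h) != 0.
  by split; apply: nfac_xq_neq0; lia.
transitivity (`|t0| * ((xq q ^+ (d + h.+1 - j))^-1
                 * (nfac (xq q) (j - h) / xq q ^+ (j - h) * (nfac (xq q) (m - h) / xq q ^+ (m - h))))
              * (xq q ^+ (d + h.+1 - j) * xq q ^+ (j - h) * xq q ^+ (m - h)
                 / (nfac (xq q) (j - h) * nfac (xq q) (m - h)))).
  by field; rewrite n1 n2 !xq_exp_neq0.
by rewrite -E e_rhs -e_lhs /rho /qratio; field; rewrite n1 n2 !xq_exp_neq0.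
Qed.

End TermNorms.

Section TopTerm.
Variables (q d j : nat).
Hypothesis q_ge2 : (2 <= q)%N.

(* The range 0 < x <= 1/2 of x = 1/q, kept out of the local context so that
   lia is never confronted with rational hypotheses. *)
Local Notation x0 := (xq_gt0 q_ge2).
Local Notation x1 := (xq_le_half q_ge2).

Lemma weight_ge0 m h : 0 <= weight q m h.
Proof.
rewrite /weight /wratio; apply: divr_ge0; last exact: nfac_ge0 x0 x1 _.
by apply: mulr_ge0; [exact: expx_ge0 x0 _ | exact: nfac_ge0 x0 x1 _].
Qed.

Lemma weight_le1 m h : (3 <= m)%N -> weight q m h <= 1.
Proof. exact: (wratio_le1 x0 x1 h (m := m)). Qed.

Lemma weight_le m h (A B K : rat) : (3 <= m)%N ->
  xq q ^+ h <= A -> nfac (xq q) (m - h) <= B -> A * B <= K * (15/16) -> weight q m h <= K.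
Proof. exact: (wratio_le x0 x1 (h := h) (n := m - h) (m := m) (A := A) (B := B)). Qed.

Lemma weight_top m : weight q m m = 0.
Proof. by rewrite /weight /wratio subnn /nfac expr0 subrr mulr0 mul0r. Qed.

Lemma weight_le_fifth m h : (3 <= h)%N -> (3 <= m)%N -> weight q m h <= 1/5.
Proof.
move=> h3 m3; apply: (weight_le (A := 1/8) (B := 3/2) m3).
- by have := expx_anti x0 x1 h3; have [_ x3 _ _] := expx_small x0 x1; lra.
- by have := nfac_le x0 x1 (m - h); have := x1; lra.
- lra.
Qed.

Lemma weight_le_4_15 m h : (2 <= h)%N -> m = h.+2 -> weight q m h <= 4/15.
Proof.
move=> h2 ->; have m3 : (3 <= h.+2)%N by lia.
apply: (weight_le (A := 1/4) (B := 1) m3).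
- by have := expx_anti x0 x1 h2; have [x2 _ _ _] := expx_small x0 x1; lra.
- by rewrite subSn // subSnn nfac2; have := expx_ge0 x0 2; lra.
- lra.
Qed.

Lemma weight_le_3_5 m h : (1 <= h)%N -> (h.+2 <= m)%N -> weight q m h <= 3/5.
Proof.
move=> h1 hm; have m3 : (3 <= m)%N by lia.
apply: (weight_le (A := 1/2) (B := 9/8) m3).
- by have := expx_anti x0 x1 h1; rewrite expr1; have := x1; lra.
- have gap : (2 <= m - h)%N by lia.
  have := nfac_le_even x0 x1 (isT : ~~ odd 2) gap.
  by have [_ x3 _ _] := expx_small x0 x1; lra.
- lra.
Qed.

Lemma weight_le_3_10 m h : (2 <= h)%N -> (h < m)%N -> (4 <= m)%N -> weight q m h <= 3/10.
Proof.
move=> h2 hm m4; have m3 : (3 <= m)%N by lia.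
have [gap1 | gap2] := eqVneq (m - h)%N 1.
- apply: (weight_le (A := 1/8) (B := 3/2) m3).
  + have h3 : (3 <= h)%N by lia.
    by have := expx_anti x0 x1 h3; have [_ x3 _ _] := expx_small x0 x1; lra.
  + by rewrite gap1 nfac1; have := x1; lra.
  + lra.
- apply: (weight_le (A := 1/4) (B := 9/8) m3).
  + by have := expx_anti x0 x1 h2; have [x2 _ _ _] := expx_small x0 x1; lra.
  + have gap : (2 <= m - h)%N by lia.
    have := nfac_le_even x0 x1 (isT : ~~ odd 2) gap.
    by have [_ x3 _ _] := expx_small x0 x1; lra.
  + lra.
Qed.

Lemma rho_pair m h : (h < d)%N -> (h < j)%N -> (h < m)%N ->
  rho q d j m h * rho q d j m h.+1 =
  xq q ^+ ((m - h) + (m - h.+1)) * npair (xq q) (d - h.+1) * npair (xq q) h.+1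
    / (npair (xq q) (j - h.+1) * npair (xq q) (m - h.+1)).
Proof.
move=> hd hj hm; rewrite /rho /qratio /npair !subnSK // exprD !invfM; ring.
Qed.

Lemma term_le_rho m h K : (h < j)%N -> (j <= d)%N -> (h < m)%N ->
  rho q d j m h <= K -> `|term q d j m h| <= K * `|term q d j m h.+1|.
Proof.
move=> hj jd hm rK; rewrite norm_term_succ // mulrC.
exact: ler_wpM2r.
Qed.

Lemma term_le_rho2 m h K : (h.+1 < j)%N -> (j <= d)%N -> (h.+1 < m)%N ->
  rho q d j m h * rho q d j m h.+1 <= K -> `|term q d j m h| <= K * `|term q d j m h.+2|.
Proof.
move=> hj jd hm rK; have [hj' hm'] : (h < j)%N /\ (h < m)%N by lia.
rewrite (norm_term_succ q_ge2) // (norm_term_succ q_ge2) //.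
by rewrite -mulrA mulrC [rho _ _ _ _ h.+1 * _]mulrC; apply: ler_wpM2r.
Qed.

(* When m <= j the sum defining Q_j(i) is cut off at h = m by the Gaussian
   binomial [m, h]; its top summand outweighs all the others. *)
Lemma dominant_top_cut i m : (1 <= i)%N -> d = (i + m)%N -> (4 <= m)%N -> (m <= j)%N ->
  (j <= d)%N ->
  \sum_(0 <= h < m) `|term q d j m h| * (1 + weight q m h)
    + `|term q d j m m| * weight q m m < `|term q d j m m|.
Proof.
move=> i1 dE m4 mj jd; have [k mE] : exists k, m = k.+2 by exists (m - 2)%N; lia.
have [k2 m3] : (2 <= k)%N /\ (3 <= m)%N by lia.
rewrite mE; subst m.
apply: (dominant_top_of_ratios (a := fun h => `|term q d j k.+2 h|) (w := weight q k.+2)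
          (r1 := 33/64) (r2 := 3/16) (c := 27/160) (W0 := 0) (W1 := 1/5) (W2 := 4/15)).
- by move=> h; exact: normr_ge0.
- by rewrite normr_gt0 term_neq0.
- by move=> h _; rewrite weight_ge0 weight_le1.
- by rewrite weight_ge0 weight_le_fifth.
- by rewrite weight_ge0 weight_le_4_15.
- by rewrite weight_top.
- apply: (term_le_rho mj jd (ltnSn _)); rewrite /rho subSS subSnn.
  apply: (qratio_top_cut x0 x1); lia.
- have [kj kd] : (k.+1 < j)%N /\ (k < d)%N by lia.
  apply: (term_le_rho2 mj jd (ltnSn _)); rewrite rho_pair ?(ltnW kj) //.
  have -> : (k.+2 - k.+1 = 1)%N by lia.
  apply: (pratio_cut x0 x1); lia.
- move=> k_pos; have [l kE] : exists l, k = l.+1 by exists k.-1; rewrite prednK.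
  have [lj lm] : (l < j)%N /\ (l < l.+3)%N by lia.
  rewrite kE -pred_Sn; apply: (term_le_rho lj jd lm); rewrite /rho.
  have -> : (l.+3 - l = 3)%N by lia.
  apply: (qratio_third_cut x0 x1); lia.
- lra.
- move=> h hk; have [hj hm] : (h < j)%N /\ (h < k.+2)%N by lia.
  rewrite mulrC; apply: (term_le_rho hj jd hm).
  apply: (qratio_le_quarter x0 x1); lia.
- lra.
Qed.

(* When j < m the sum is cut off at h = j by the Gaussian binomial [d - h, d - j]. *)
Lemma dominant_top_full i m : (1 <= i)%N -> d = (i + m)%N -> (4 <= m)%N -> (2 <= j)%N -> (j < m)%N ->
  \sum_(0 <= h < j) `|term q d j m h| * (1 + weight q m h)
    + `|term q d j m j| * weight q m j < `|term q d j m j|.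
Proof.
move=> i1 dE m4 j2 jm; have [jd m3] : (j <= d)%N /\ (3 <= m)%N by lia.
have [k jE] : exists k, j = k.+2 by exists (j - 2)%N; lia.
(* Replace j by k + 2 where it is a summation index, not a parameter of term. *)
rewrite {1 4 5 7}jE.
apply: (dominant_top_of_ratios (a := fun h => `|term q d j m h|) (w := weight q m)
          (r1 := 9/32) (r2 := 1/16) (c := 1/4) (W0 := 3/10) (W1 := 3/5) (W2 := 1)).
- by move=> h; exact: normr_ge0.
- have [kj km] : (k.+2 <= j)%N /\ (k.+2 <= m)%N by lia.
  by rewrite normr_gt0 term_neq0.
- by move=> h _; rewrite weight_ge0 weight_le1.
- by rewrite weight_ge0 weight_le_3_5 //; lia.
- by rewrite weight_ge0 weight_le1.
- by rewrite weight_le_3_10 //; lia.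
- have [kj km] : (k.+1 < j)%N /\ (k.+1 < m)%N by lia.
  apply: (term_le_rho kj jd km); rewrite /rho jE subSS subSnn.
  apply: (qratio_top_full x0 x1); lia.
- have [kj [km kd]] : (k.+1 < j)%N /\ (k.+1 < m)%N /\ (k < d)%N by lia.
  apply: (term_le_rho2 kj jd km); rewrite rho_pair ?(ltnW kj) ?(ltnW km) //.
  have -> : (j - k.+1 = 1)%N by lia.
  rewrite [npair _ 1 * _]mulrC; apply: (pratio_full x0 x1); lia.
- move=> k_pos; have [l kE] : exists l, k = l.+1 by exists k.-1; rewrite prednK.
  have [lj lm] : (l < j)%N /\ (l < m)%N by lia.
  rewrite kE -pred_Sn; apply: (term_le_rho lj jd lm).
  apply: (qratio_le_quarter x0 x1); lia.
- lra.
- move=> h hk; have [hj hm] : (h < j)%N /\ (h < m)%N by lia.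
  rewrite mulrC; apply: (term_le_rho hj jd hm).
  apply: (qratio_le_quarter x0 x1); lia.
- lra.
Qed.

End TopTerm.

Theorem lemma5p5 (q d i j : nat) :
  prime_power q -> (2 <= q)%N -> (6 <= d)%N ->
  ((1 <= i <= d - 5)%N /\ (2 <= j <= d)%N \/
   i = (d - 4)%N /\ (2 <= j <= 4)%N) ->
  `|Qeig q d j (i.+1)| < `|Qeig q d j i|.
Proof.
move=> _ q2 d6 range.
have [i1 [j2 [jd m4]]] : (1 <= i)%N /\ (2 <= j)%N /\ (j <= d)%N /\ (4 <= d - i)%N.
  by case: range => -[]; lia.
(* Write m = d - i = n + 1, so that Q_j(i + 1) uses m - 1 = n. *)
have [n mE] : exists n, (d - i = n.+1)%N by exists (d - i).-1; lia.
have dE : d = (i + n.+1)%N by lia.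
rewrite !QeigE mE (_ : d - i.+1 = n)%N; last by lia.
apply: (norm_sum_lt_of_dominant_top (w := weight q n.+1)).
- lia.
- move=> h hn; apply: norm_term_shift => //; lia.
- exact: weight_ge0.
- case: (leqP n.+1 j) => [mj | jm].
  + apply: (dominant_top_cut q2 i1 dE) => //; lia.
  + apply: (dominant_top_full q2 i1 dE); lia.
Qed.
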